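(* Let $d\ge1$ and $\lambda=(\lambda_1,\dots,\lambda_d)$ a vector of positive integers with $\sum_t\lambda_t=n\ge2$. If $i\preceq j$ in $P(\lambda)$ (with $i,j\in\{0,\dots,n-2\}$), then also $j-i\preceq j$ in $P(\lambda)$.
   Context: $\Delta_\lambda=\mathrm{conv}(e_1,\dots,e_d,\lambda)\subset\mathbb{R}^d$, with fundamental parallelepiped $\Pi_\lambda=\{\sum_{i=1}^d\gamma_i(1,e_i)+\gamma_{d+1}(1,\lambda):0\le\gamma_i<1\}\subset\mathbb{R}^{d+1}$. The poset $P(\lambda)$ is the set $\Pi_\lambda\cap\mathbb{Z}^{d+1}$ ordered by $\sigma\preceq\mu$ iff $\mu-\sigma\in\Pi_\lambda\cap\mathbb{Z}^{d+1}$ (a reflexive relation). For $0\le b<n-1$ set $p(b)=\left(\sum_{t=1}^d\lceil b\lambda_t/(n-1)\rceil-b,\ \lceil b\lambda_1/(n-1)\rceil,\dots,\lceil b\lambda_d/(n-1)\rceil\right)$; $b\mapsto p(b)$ is a bijection from $\{0,\dots,n-2\}$ onto $\Pi_\lambda\cap\mathbb{Z}^{d+1}$, and each integer $b$ is identified with $p(b)$, so $P(\lambda)$ is a partial order on $\{0,\dots,n-2\}$. *)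

From HB Require Import structures.
From mathcomp Require Import all_boot all_order all_algebra.
From mathcomp Require Import reals.
Set Implicit Arguments. Unset Strict Implicit. Unset Printing Implicit Defensive.
Import Order.TTheory GRing.Theory Num.Theory.
Local Open Scope ring_scope.

(* lam : 'I_d -> nat is the vector (lambda_1,...,lambda_d);
   vectors of R^{d+1} / Z^{d+1} are functions 'I_d.+1 -> _, coordinate ord0
   being the first ("height") coordinate and coordinate (lift ord0 t) being
   the (t+1)-th one. *)

Definition lamsum (d : nat) (lam : 'I_d -> nat) : nat := (\sum_(t < d) lam t)%N.

Definition inPi (R : realType) (d : nat) (lam : 'I_d -> nat)
    (v : 'I_d.+1 -> int) : Prop :=
  exists (g : 'I_d -> R) (g' : R),
    (forall t, 0 <= g t < 1) /\ (0 <= g' < 1) /\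
    (v ord0)%:~R = \sum_(t < d) g t + g' /\
    (forall t : 'I_d, (v (lift ord0 t))%:~R = g t + g' * (lam t)%:R).

Definition cl (R : realType) (d : nat) (lam : 'I_d -> nat) (b : nat) (t : 'I_d) : int :=
  Num.ceil (((b * lam t)%N)%:R / ((lamsum lam).-1)%:R : R).

Definition pvec (R : realType) (d : nat) (lam : 'I_d -> nat) (b : nat)
    : 'I_d.+1 -> int :=
  fun k => match unlift ord0 k with
           | None => \sum_(t < d) cl R lam b t - b%:Z
           | Some t => cl R lam b t
           end.

(* sigma <= mu in P(lambda) iff mu - sigma lies in Pi_lambda ∩ Z^{d+1};
   the elements b of {0,...,n-2} are identified with p(b). *)
Definition Ple (R : realType) (d : nat) (lam : 'I_d -> nat) (i j : nat) : Prop :=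
  inPi R lam (fun k => pvec R lam j k - pvec R lam i k).

From HB Require Import structures.
From mathcomp Require Import all_boot all_order all_algebra.
From mathcomp Require Import reals.
From mathcomp Require Import ring lra.
Set Implicit Arguments. Unset Strict Implicit. Unset Printing Implicit Defensive.
Import Order.TTheory GRing.Theory Num.Theory.
Local Open Scope ring_scope.

(* Write N = n - 1 and r_b(t) = b lam_t / N.  In a decomposition
   p(j) - p(i) = sum_t g_t (1, e_t) + g' (1, lambda), comparing the height
   with the sum of the other coordinates forces g' = (j - i) / N, hence
   g_t = ceil r_j(t) - ceil r_i(t) - (r_j(t) - r_i(t)).  So i <= j in P(lambda)
   means i <= j and g_t in [0, 1), which says precisely that the ceiling is
   additive: ceil r_(j-i)(t) = ceil r_j(t) - ceil r_i(t).  Then p(j) - p(j-i)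
   has coordinates ceil r_i(t), and with g' = i / N its g_t is
   ceil r_i(t) - r_i(t), again in [0, 1). *)

Lemma ceil_gap_itv (R : archiRealDomainType) (x : R) :
  0 <= (Num.ceil x)%:~R - x < 1.
Proof. by have := ceil_itv x; rewrite intrB; move=> /andP[? ?]; apply/andP; split; lra. Qed.

Lemma ceilB_gap (R : archiRealDomainType) (x y : R) :
  0 <= (Num.ceil x - Num.ceil y)%:~R - (x - y) < 1 ->
  Num.ceil (x - y) = Num.ceil x - Num.ceil y.
Proof. by rewrite intrB => /andP[? ?]; apply: ceil_def; rewrite !intrB; apply/andP; split; lra. Qed.

Section FundamentalParallelepiped.

Variables (R : realType) (d : nat) (lam : 'I_d -> nat).

Lemma pvec0 b : pvec R lam b ord0 = \sum_(t < d) cl R lam b t - b%:Z.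
Proof. by rewrite /pvec unlift_none. Qed.

Lemma pvec_lift b t : pvec R lam b (lift ord0 t) = cl R lam b t.
Proof. by rewrite /pvec liftK. Qed.

Lemma pvecB_height i j :
  \sum_(t < d) (pvec R lam j (lift ord0 t) - pvec R lam i (lift ord0 t))
    - (pvec R lam j ord0 - pvec R lam i ord0) = j%:Z - i%:Z.
Proof.
under eq_bigr do rewrite !pvec_lift.
by rewrite !pvec0 sumrB; ring.
Qed.

Lemma inPiP (v : 'I_d.+1 -> int) :
  inPi R lam v <->
  exists g' : R,
    [/\ 0 <= g' < 1,
        (\sum_(t < d) v (lift ord0 t) - v ord0)%:~R = g' * ((lamsum lam)%:R - 1)
      & forall t, 0 <= (v (lift ord0 t))%:~R - g' * (lam t)%:R < 1].
Proof.
have lamsumE : (lamsum lam)%:R = \sum_(t < d) (lam t)%:R :> R by rewrite natr_sum.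
rewrite intrB rmorph_sum /=; split.
- move=> [g [g' [g_itv [g'_itv [v0E vtE]]]]]; exists g'; split=> //.
  + under eq_bigr do rewrite vtE.
    by rewrite big_split /= -mulr_sumr -lamsumE v0E; ring.
  + by move=> t; rewrite vtE addrK.
- move=> [g' [g'_itv heightE gap]].
  exists (fun t => (v (lift ord0 t))%:~R - g' * (lam t)%:R), g'.
  split=> //; split=> //; split; last by move=> t; rewrite subrK.
  by rewrite sumrB -mulr_sumr -lamsumE; lra.
Qed.

Hypothesis lamsum_ge2 : (2 <= lamsum lam)%N.

Let N := (lamsum lam).-1.

Definition ratio (b : nat) (t : 'I_d) : R := (b * lam t)%:R / N%:R.

Lemma ratioB i j t : (i <= j)%N -> ratio (j - i) t = ratio j t - ratio i t.
Proof. by move=> ij; rewrite /ratio mulnBl natrB ?leq_mul2r ?ij ?orbT // mulrBl. Qed.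

Lemma clE b t : cl R lam b t = Num.ceil (ratio b t).
Proof. by []. Qed.

Lemma PleP i j : (j < N)%N ->
  Ple R lam i j <->
  (i <= j)%N /\
  forall t, 0 <= (cl R lam j t - cl R lam i t)%:~R - (ratio j t - ratio i t) < 1.
Proof.
move=> jN.
have N_gt0 : 0 < N%:R :> R by rewrite ltr0n -ltnS prednK // ltnW.
have NE : N%:R = (lamsum lam)%:R - 1 :> R.
  by rewrite -[in RHS](prednK (ltnW lamsum_ge2)) -natr1 addrK.
rewrite /Ple inPiP; split.
- move=> [g' [/andP[g'_ge0 _] heightE gap]].
  rewrite pvecB_height intrB -!pmulrn -NE in heightE.
  have g'E : g' = (j%:R - i%:R) / N%:R.
    by rewrite heightE mulfK // gt_eqF.
  split.
  + rewrite -(ler_nat R); have := mulr_ge0 g'_ge0 (ltW N_gt0); lra.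
  + move=> t; have g'lamE : g' * (lam t)%:R = ratio j t - ratio i t.
      by rewrite g'E /ratio !natrM; field; rewrite gt_eqF.
    by have := gap t; rewrite !pvec_lift g'lamE intrB; apply.
- move=> [ij gap]; exists ((j - i)%:R / N%:R); split.
  + apply/andP; split; first by rewrite divr_ge0 ?ler0n.
    rewrite ltr_pdivrMr // mul1r ltr_nat.
    exact: leq_ltn_trans (leq_subr i j) jN.
  + by rewrite pvecB_height intrB -!pmulrn -NE natrB // mulfVK ?gt_eqF.
  + move=> t; rewrite !pvec_lift mulrAC -natrM -/(ratio (j - i) t) (ratioB _ ij).
    exact: gap.
Qed.

End FundamentalParallelepiped.

Theorem proposition2p14 (R : realType) (d : nat) (lam : 'I_d -> nat) :
  (0 < d)%N ->
  (forall t, 0 < lam t)%N ->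
  (2 <= lamsum lam)%N ->
  forall i j : nat,
    (i < (lamsum lam).-1)%N -> (j < (lamsum lam).-1)%N ->
    Ple R lam i j -> Ple R lam (j - i) j.
Proof.
move=> _ _ lamsum_ge2 i j _ jN /(PleP R lamsum_ge2 i jN) [ij gap].
apply/(PleP R lamsum_ge2 (j - i) jN); split=> [|t]; first exact: leq_subr.
have clB : cl R lam (j - i) t = cl R lam j t - cl R lam i t.
  by rewrite !clE (ratioB R lam t ij) ceilB_gap // -!clE.
rewrite clB (ratioB R lam t ij) !subKr clE.
exact: ceil_gap_itv.
Qed.
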